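(* Let $\phi\colon\mathbb{N}\to(0,\infty)$ be an arbitrary function and let $$R(\phi)=\{x\in\mathbb{I}\colon R_n(x)\ge\phi(n)\text{ for infinitely many }n\}.$$ Then $\mathcal{L}(R(\phi))=1$ if $\sum_{n=1}^\infty\frac{1}{\phi(n)}=\infty$, and $\mathcal{L}(R(\phi))=0$ if $\sum_{n=1}^\infty\frac{1}{\phi(n)}<\infty$.
   Context: $\mathcal{L}$ is Lebesgue measure on $(0,1)$, $\mathbb{I}=(0,1)\setminus\mathbb{Q}$. Signed Engel expansion: define $T\colon[0,1)\to[0,1)$ by: for $k\in\mathbb{N}$, $Tx=\lceil 1/x\rceil x-1$ if $x\in(\frac{1}{2k},\frac{1}{2k-1})$; $Tx=1-\lfloor 1/x\rfloor x$ if $x\in(\frac{1}{2k+1},\frac{1}{2k})$; $Tx=0$ if $x\in\{0\}\cup\{1/n\colon n\ge 2\}$. For $x\in(0,1)$, $d_1(x)=\lceil 1/x\rceil$ if $x\in[\frac{1}{2k},\frac{1}{2k-1})$ for some $k\in\mathbb{N}$, and $d_1(x)=\lfloor 1/x\rfloor$ if $x\in[\frac{1}{2k+1},\frac{1}{2k})$ for some $k\in\mathbb{N}$; $d_{n+1}(x)=d_1(T^nx)$ (defined for all $n$ when $x$ is irrational). For $x\in\mathbb{I}$, $R_1(x)=d_1(x)$ and $R_n(x)=d_n(x)/d_{n-1}(x)$ for $n\ge2$. *)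

From HB Require Import structures.
From mathcomp Require Import all_boot all_order all_algebra.
From mathcomp Require Import all_classical all_reals all_analysis.
Set Implicit Arguments. Unset Strict Implicit. Unset Printing Implicit Defensive.
Import Order.TTheory GRing.Theory Num.Theory.
Local Open Scope classical_set_scope.
Local Open Scope ring_scope.

Section SignedEngel.
Variable R : realType.

Definition in_odd_open (x : R) : Prop :=
  exists k : nat, (0 < k)%N /\ (k.*2%:R)^-1 < x /\ x < ((k.*2).-1%:R)^-1.
Definition in_even_open (x : R) : Prop :=
  exists k : nat, (0 < k)%N /\ ((k.*2).+1%:R)^-1 < x /\ x < (k.*2%:R)^-1.
Definition in_odd_halfopen (x : R) : Prop :=
  exists k : nat, (0 < k)%N /\ (k.*2%:R)^-1 <= x /\ x < ((k.*2).-1%:R)^-1.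

(* The signed Engel map T (defined for all reals; only [0,1) matters:
   on {0} u {1/n : n >= 2} it is 0, as in the paper). *)
Definition sengelT (x : R) : R :=
  if `[< in_odd_open x >] then (Num.ceil (x^-1))%:~R * x - 1
  else if `[< in_even_open x >] then 1 - (Num.floor (x^-1))%:~R * x
  else 0.

Definition sengel_d1 (x : R) : R :=
  if `[< in_odd_halfopen x >] then (Num.ceil (x^-1))%:~R
  else (Num.floor (x^-1))%:~R.

(* d_n(x) = d_1(T^(n-1) x) for n >= 1 (value at n = 0 is irrelevant) *)
Definition sengel_d (n : nat) (x : R) : R := sengel_d1 (iter n.-1 sengelT x).

Definition sengel_R (n : nat) (x : R) : R :=
  if (n <= 1)%N then sengel_d 1 x else sengel_d n x / sengel_d n.-1 x.

Definition irr01 : set R :=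
  [set x | 0 < x < 1 /\ ~ (exists q : rat, x = ratr q)].

Definition Rset (phi : nat -> R) : set R :=
  [set x | irr01 x /\
     (forall N : nat, exists n : nat, (N < n)%N /\ phi n <= sengel_R n x)].

End SignedEngel.

(* Every digit of the signed Engel expansion is even, [d_1 y = 2k], and the two
   branches of [T] with this digit are affine of slope [2k] and [-2k], mapping
   onto [(0, 1/(2k-1))] and [(0, 1/(2k+1))]; so the next half-digit is at least
   [k], resp. [k + 1].  Pulling back through these branches, the measure of the
   set of points whose digits obey constraints [P m d_m d_(m+1)] is at most the
   product of the worst-case proportions of admissible next digits.  For the
   event [R_n >= phi n] this proportion is [O(1 / phi n)], which gives the
   convergence half by Borel-Cantelli.  For [R_m < phi m] on [N < m <= M] the
   product is at most [(1 + sum_m 1 / (3 phi m))^-1], which tends to [0] when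
   the series diverges; if instead [phi n < 1] infinitely often, every
   irrational point lies in [R(phi)] since [R_n >= 1]. *)

From mathcomp Require Import all_boot all_order all_algebra.
From mathcomp Require Import all_classical all_reals all_analysis.
From mathcomp Require Import measurable_realfun.
From mathcomp Require Import zify ring lra.
Import Order.TTheory GRing.Theory Num.Theory.
Local Open Scope classical_set_scope.
Local Open Scope ring_scope.
Set Implicit Arguments. Unset Strict Implicit. Unset Printing Implicit Defensive.

Section Digits.
Variable R : realType.
Implicit Types (y z : R) (k n : nat).

Definition oddr k : R := (k.*2).-1%:R.

Lemma natr_double k : (k.*2)%:R = 2 * k%:R :> R.
Proof. by rewrite -muln2 natrM mulrC. Qed.

Lemma oddrE k : (0 < k)%N -> oddr k = 2 * k%:R - 1.
Proof. by move=> k0; rewrite /oddr -subn1 natrB ?natr_double //; lia. Qed.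

Lemma oddrS k : oddr k.+1 = 2 * k%:R + 1.
Proof. by rewrite /oddr doubleS /= -natr1 natr_double. Qed.

Lemma oddr1 : oddr 1 = 1 :> R.
Proof. by []. Qed.

Lemma oddr_ge1 k : (0 < k)%N -> 1 <= oddr k.
Proof. by move=> k0; rewrite /oddr (ler_nat R 1); lia. Qed.

Lemma oddr_gt0 k : (0 < k)%N -> 0 < oddr k.
Proof. by move=> /oddr_ge1; apply: lt_le_trans. Qed.

Lemma ler_inv_oddr (a b : nat) : (0 < a)%N -> (a <= b)%N ->
  (oddr b)^-1 <= (oddr a)^-1.
Proof.
move=> a0 ab; rewrite lef_pV2 ?posrE ?oddr_gt0 //; last exact: leq_trans ab.
by rewrite /oddr ler_nat; lia.
Qed.

Lemma irrational_affine (a b : rat) y : a != 0 ->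
  irrational y -> irrational (ratr a * y + ratr b).
Proof.
move=> a0 iy [q _ hq]; apply: iy; exists ((q - b) / a) => //.
by rewrite fmorph_div rmorphB /= hq; field; rewrite fmorph_eq0.
Qed.

Lemma irrational_trunc_inv y : 0 < y -> irrational y ->
  exists n, n%:R < y^-1 < n.+1%:R.
Proof.
move=> y0 iy.
have /andP[lo hi] : (Num.truncn y^-1)%:R <= y^-1 < (Num.truncn y^-1).+1%:R.
  by apply: truncn_itv; rewrite invr_ge0 ltW.
exists (Num.truncn y^-1); rewrite hi andbT lt_neqAle lo andbT.
apply/eqP => e; apply: iy; exists (Num.truncn y^-1)%:R^-1 => //.
by rewrite fmorphV rmorph_nat e invrK.
Qed.

Lemma ceil_natE (c : nat) z : (0 < c)%N -> c.-1%:R < z <= c%:R ->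
  Num.ceil z = c%:Z.
Proof.
move=> c0 hz; apply: ceil_def.
by rewrite intrB -!pmulrn -natrB ?subn1.
Qed.

Lemma floor_natE (c : nat) z : c%:R <= z < c.+1%:R -> Num.floor z = c%:Z.
Proof. by move=> hz; apply: floor_def; rewrite intrD -!pmulrn natr1. Qed.

(* [(o + 1) y - 1] and [1 - e y] are [T y] when [1/y] lies in [(o, o + 1)] with
   [o] odd, resp. in [(e, e + 1)] with [e] even. *)
Lemma odd_branch_range (o y : R) : 0 < o -> 0 < y -> o < y^-1 < o + 1 ->
  0 < (o + 1) * y - 1 < o^-1.
Proof.
move=> o0 y0 /andP[lo hi].
move: lo hi; rewrite -(div1r y) ltr_pdivlMr // ltr_pdivrMr // => lo hi.
rewrite subr_gt0 hi /= -(div1r o) ltr_pdivlMr //.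
have : (o + 1) * (o * y) < o + 1 by rewrite -[X in _ < X]mulr1 ltr_pM2l //; lra.
lra.
Qed.

Lemma even_branch_range (e y : R) : 0 < e -> 0 < y -> e < y^-1 < e + 1 ->
  0 < 1 - e * y < (e + 1)^-1.
Proof.
move=> e0 y0 /andP[lo hi].
move: lo hi; rewrite -(div1r y) ltr_pdivlMr // ltr_pdivrMr // => lo hi.
rewrite subr_gt0 lo /= -(div1r (e + 1)) ltr_pdivlMr; last by lra.
have : e * 1 < e * ((e + 1) * y) by rewrite ltr_pM2l.
lra.
Qed.

Lemma inv_in_itv (a b : nat) y : (0 < a)%N -> 0 < y ->
  a%:R < y^-1 < b%:R -> (b%:R)^-1 < y < (a%:R)^-1.
Proof.
move=> a0 y0 /andP[lo hi].
have a0' : (0 : R) < a%:R by rewrite ltr0n.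
have b0 : (0 : R) < b%:R by apply: lt_trans (lt_trans a0' lo) hi.
by apply/andP; split; [rewrite invf_plt ?posrE | rewrite invf_pgt ?posrE].
Qed.

Lemma sengel_odd_branch k y : (0 < k)%N -> 0 < y -> oddr k < y^-1 < (k.*2)%:R ->
  sengel_d1 y = (k.*2)%:R /\ sengelT y = (k.*2)%:R * y - 1.
Proof.
move=> k0 y0 hz.
have /andP[lo hi] := inv_in_itv (ltac:(lia) : (0 < (k.*2).-1)%N) y0 hz.
have ioo : in_odd_open y by exists k.
have ioh : in_odd_halfopen y by exists k; rewrite ltW.
have ce : Num.ceil y^-1 = (k.*2)%:Z.
  by case/andP: hz => h1 h2; apply: ceil_natE; rewrite ?double_gt0 // h1 ltW.
by rewrite /sengel_d1 /sengelT (asboolT ioh) (asboolT ioo) ce -pmulrn.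
Qed.

Lemma not_in_odd_halfopen k y : 0 < y -> (k.*2)%:R < y^-1 < (k.*2).+1%:R ->
  ~ in_odd_halfopen y.
Proof.
move=> y0 /andP[lo hi] [j [j0 [h1 h2]]].
have pj : ((j.*2)%:R : R) \is Num.pos by rewrite posrE ltr0n double_gt0.
have pj' : ((j.*2).-1%:R : R) \is Num.pos by rewrite posrE ltr0n; lia.
rewrite invf_ple ?posrE // in h1; rewrite invf_pgt ?posrE // in h2.
have : ((j.*2).-1 < (k.*2).+1)%N by rewrite -(ltr_nat R); apply: lt_trans hi.
have : (k.*2 < j.*2)%N by rewrite -(ltr_nat R); apply: lt_le_trans h1.
lia.
Qed.

Lemma sengel_even_branch k y : (0 < k)%N -> 0 < y -> (k.*2)%:R < y^-1 < oddr k.+1 ->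
  sengel_d1 y = (k.*2)%:R /\ sengelT y = 1 - (k.*2)%:R * y.
Proof.
move=> k0 y0 hz.
have nioh := not_in_odd_halfopen y0 hz.
have nioo : ~ in_odd_open y.
  by move=> [j [j0 [h1 h2]]]; apply: nioh; exists j; rewrite ltW.
have /andP[lo hi] := inv_in_itv (ltac:(lia) : (0 < k.*2)%N) y0 hz.
have iee : in_even_open y by exists k.
have fl : Num.floor y^-1 = (k.*2)%:Z.
  by case/andP: hz => h1 h2; apply: floor_natE; rewrite ltW.
by rewrite /sengel_d1 /sengelT (asboolF nioh) (asboolF nioo) (asboolT iee) fl -pmulrn.
Qed.

Lemma sengel_digit k0 y : (0 < k0)%N -> irrational y -> 0 < y -> y < (oddr k0)^-1 ->
  exists2 k, (k0 <= k)%N & [/\ sengel_d1 y = (k.*2)%:R, irrational (sengelT y) &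
    (0 < sengelT y < (oddr k)^-1 /\
       y = ((k.*2)%:R)^-1 * sengelT y + ((k.*2)%:R)^-1) \/
    (0 < sengelT y < (oddr k.+1)^-1 /\
       y = - ((k.*2)%:R)^-1 * sengelT y + ((k.*2)%:R)^-1)].
Proof.
move=> k00 iy y0 yk0.
have [n /andP[lo hi]] := irrational_trunc_inv y0 iy.
have k0n : ((k0.*2).-1 < n.+1)%N.
  rewrite -(ltr_nat R); apply: lt_trans hi; rewrite -/(oddr k0).
  by rewrite -(invrK (oddr k0)) ltf_pV2 ?posrE ?invr_gt0 ?oddr_gt0.
have [[k [nE kpos k0k]] | [k [nE kpos k0k]]] :
    (exists k, [/\ n = (k.*2).-1, 0 < k & k0 <= k]%N) \/
    (exists k, [/\ n = k.*2, 0 < k & k0 <= k]%N).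
  have := odd_double_half n; case: (odd n) => /= hn.
    by left; exists n./2.+1; split; lia.
  by right; exists n./2; split; lia.
- have n1 : n.+1 = k.*2 by lia.
  rewrite nE -/(oddr k) in lo; rewrite n1 in hi.
  have ek : (k.*2)%:R = oddr k + 1 :> R by rewrite -n1 -natr1 nE.
  have [d1E TE] := sengel_odd_branch kpos y0 (introT andP (conj lo hi)).
  exists k => //; split => //.
  + rewrite TE (_ : _ - 1 = ratr (k.*2)%:R * y + ratr (-1)); last first.
      by rewrite rmorph_nat rmorphN1.
    by apply: irrational_affine; rewrite // pnatr_eq0; lia.
  + left; rewrite TE ek; split.
      by apply: odd_branch_range; rewrite ?oddr_gt0 // lo -ek hi.
    by field; rewrite -ek pnatr_eq0; lia.
- rewrite nE in lo hi.
  have ek : oddr k.+1 = (k.*2)%:R + 1 :> R by rewrite /oddr /= -natr1.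
  have [d1E TE] := sengel_even_branch kpos y0 (introT andP (conj lo hi)).
  exists k => //; split => //.
  + rewrite TE (_ : 1 - _ = ratr (- (k.*2)%:R) * y + ratr 1); last first.
      by rewrite rmorphN rmorph_nat rmorph1 mulNr addrC.
    by apply: irrational_affine; rewrite // oppr_eq0 pnatr_eq0; lia.
  + right; rewrite TE ek; split.
      by apply: even_branch_range; rewrite ?ltr0n ?double_gt0 // lo -ek hi.
    by field; rewrite pnatr_eq0; lia.
Qed.

End Digits.
Arguments oddr {R} k.

Section Orbit.
Variable R : realType.
Implicit Types (x y D : R) (m n k : nat).

Lemma irr01P y : irr01 y <-> 0 < y < 1 /\ irrational y.
Proof.
split=> -[y01 iy]; split=> // -[q].
  by move=> _ qy; apply: iy; exists q.
by move=> yq; apply: iy; exists q.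
Qed.

Lemma sengel_digit_lb k0 y : (0 < k0)%N -> irrational y -> 0 < y < (oddr k0)^-1 ->
  exists2 k, (k0 <= k)%N & [/\ sengel_d1 y = (k.*2)%:R, irrational (sengelT y) &
    0 < sengelT y < (oddr k)^-1].
Proof.
move=> k00 iy /andP[y0 yk0].
have [k k0k [d1E iT [[hT _]|[/andP[T0 T1] _]]]] := sengel_digit k00 iy y0 yk0.
  by exists k.
exists k => //; split => //; rewrite T0 (lt_le_trans T1) // ler_inv_oddr //.
exact: leq_trans k00 k0k.
Qed.

Lemma sengel_digit01 y : irr01 y ->
  exists2 k, (0 < k)%N & [/\ sengel_d1 y = (k.*2)%:R, irrational (sengelT y) &
    0 < sengelT y < (oddr k)^-1].
Proof. by move=> /irr01P[y01 iy]; apply: sengel_digit_lb; rewrite ?oddr1 ?invr1. Qed.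

Lemma sengelT_irr01 y : irr01 y -> irr01 (sengelT y).
Proof.
move=> /sengel_digit01[k k0 [_ iT /andP[T0 T1]]]; apply/irr01P; split => //.
by rewrite T0 (lt_le_trans T1) // invf_le1 ?oddr_ge1 ?oddr_gt0.
Qed.

Lemma iter_sengelT_irr01 m x : irr01 x -> irr01 (iter m (@sengelT R) x).
Proof. by move=> x01; elim: m => //= m; exact: sengelT_irr01. Qed.

Lemma sengel_d1_ge2 y : irr01 y -> 2 <= sengel_d1 y.
Proof. by move=> /sengel_digit01[k k0 [-> _ _]]; rewrite (ler_nat R 2); lia. Qed.

Lemma sengel_d1_le_sengelT y : irr01 y -> sengel_d1 y <= sengel_d1 (sengelT y).
Proof.
move=> /sengel_digit01[k k0 [-> iT hT]].
have [j kj [-> _ _]] := sengel_digit_lb k0 iT hT.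
by rewrite ler_nat leq_double.
Qed.

(* [cylinder P n D] is the set of points whose digits [d_1 .. d_n] satisfy
   [P m d_m d_(m+1)] for [m < n], with the convention [d_0 = D]. *)
Fixpoint cylinder (P : nat -> R -> R -> Prop) n D : set R :=
  if n is n'.+1 then
    [set y | irrational y /\ P 0%N D (sengel_d1 y) /\
             cylinder (fun m => P m.+1) n' (sengel_d1 y) (sengelT y)]
  else setT.

Definition prev_digit D m x : R :=
  if m is m'.+1 then sengel_d1 (iter m' (@sengelT R) x) else D.

Lemma mem_cylinder n : forall P D x, irr01 x ->
  (forall m, (m < n)%N -> P m (prev_digit D m x) (sengel_d1 (iter m (@sengelT R) x))) ->
  cylinder P n D x.
Proof.
elim: n => [//|n IH] P D x x01 HP /=.
split; first by case/irr01P: x01.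
split; first exact: (HP 0%N).
apply: IH => [|m mn]; first exact: sengelT_irr01.
have := HP m.+1 mn; rewrite iterSr.
by case: m {mn} => [|m] //=; rewrite -iterSr.
Qed.

Lemma sengel_RE m x :
  sengel_R m.+1 x = sengel_d1 (iter m (@sengelT R) x) / prev_digit 1 m x.
Proof. by rewrite /sengel_R /sengel_d; case: m => [|m] /=; rewrite ?divr1. Qed.

Lemma prev_digit_ge1 m x : irr01 x -> 1 <= prev_digit 1 m x.
Proof.
case: m => [|m] x01 //=.
by apply: le_trans (sengel_d1_ge2 (iter_sengelT_irr01 m x01)); rewrite ler1n.
Qed.

Lemma prev_digit_gt0 m x : irr01 x -> 0 < prev_digit 1 m x.
Proof. by move=> /(prev_digit_ge1 m); apply: lt_le_trans. Qed.

Lemma sengel_R_ge1 m x : irr01 x -> 1 <= sengel_R m.+1 x.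
Proof.
move=> x01; rewrite sengel_RE ler_pdivlMr ?prev_digit_gt0 // mul1r.
case: m => [|m] /=.
  by apply: le_trans (sengel_d1_ge2 x01); rewrite ler1n.
by apply: sengel_d1_le_sengelT; exact: iter_sengelT_irr01.
Qed.

End Orbit.

Section OuterLebesgue.
Variable R : realType.
Implicit Types (A B S : set R) (a b : R).
Local Open Scope ereal_scope.
Local Notation lam := (@lebesgue_measure R).

(* [lebesgue_measure] is by definition the outer measure on every set, so no
   measurability is needed below. *)
Lemma lebesgue_measureE A : lam A = ((@wlength R idfun)^*)%mu A.
Proof. by []. Qed.

Lemma le_lebesgue_measure A B : A `<=` B -> lam A <= lam B.
Proof. by move=> AB; rewrite !lebesgue_measureE; exact: le_outer_measure. Qed.

Lemma lebesgue_measure_bigcup (F : nat -> set R) :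
  lam (\bigcup_n F n) <= \sum_(n <oo) lam (F n).
Proof. by rewrite lebesgue_measureE; exact: outer_measure_sigma_subadditive. Qed.

Lemma lebesgue_measureU2 A B : lam (A `|` B) <= lam A + lam B.
Proof. by rewrite !lebesgue_measureE; exact: outer_measureU2. Qed.

Lemma lebesgue_measure_itv0 a : (0 <= a)%R -> lam `]0%R, a[ = a%:E.
Proof.
move=> a0; rewrite lebesgue_measure_itv /= lte_fin.
case: ltP => [_|a_le0]; first by rewrite -EFinB subr0.
by have -> : a = 0%R by apply/le_anti; rewrite a0 a_le0.
Qed.

Lemma lebesgue_cover01_ge1 A B : `]0%R, 1%R[ `<=` A `|` B -> lam B = 0 -> 1 <= lam A.
Proof.
move=> cover B0; rewrite -(lebesgue_measure_itv0 ler01).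
apply: le_trans (le_lebesgue_measure cover) _.
by apply: le_trans (lebesgue_measureU2 _ _) _; rewrite B0 adde0.
Qed.

Definition affine_itv a b (x : R * R) : R * R :=
  let c := (a * ((x.1 + x.2) / 2) + b)%R in
  let r := (`|a| * ((x.2 - x.1) / 2))%R in (c - r, c + r)%R.

Lemma affine_image_itv_sub a b (x : R * R) : a != 0%R ->
  (fun z => a * z + b)%R @` `]x.1, x.2[ `<=`
    `](affine_itv a b x).1, (affine_itv a b x).2[.
Proof.
move=> a0 y [z /=]; rewrite in_itv /= => /andP[lo hi] <-.
rewrite in_itv /= -ltr_distl.
have -> : (a * z + b - (a * ((x.1 + x.2) / 2) + b) = a * (z - (x.1 + x.2) / 2))%R.
  by ring.
rewrite normrM ltr_pM2l ?normr_gt0 // ltr_distl; apply/andP; split; lra.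
Qed.

Lemma wlength_affine_itv a b (x : R * R) : a != 0%R ->
  wlength idfun `](affine_itv a b x).1, (affine_itv a b x).2[ =
    (`|a|)%:E * wlength idfun `]x.1, x.2[.
Proof.
move=> a0; rewrite !wlength_itv /= !lte_fin.
set c := (a * _ + b)%R; set r := (`|a| * _)%R.
have len : (c + r - (c - r) = `|a| * (x.2 - x.1))%R by rewrite /r; field.
rewrite -subr_gt0 len pmulr_rgt0 ?normr_gt0 // subr_gt0.
by case: ltP => _; rewrite ?mule0 // -!EFinD -EFinM len.
Qed.

Lemma lebesgue_measure_affine a b S : a != 0%R ->
  lam ((fun z => a * z + b)%R @` S) <= (`|a|)%:E * lam S.
Proof.
move=> a0; have a_gt0 : (0 < `|a|)%R by rewrite normr_gt0.
rewrite [lam S]lebesgue_measureE outer_measure_open_itv_cover -lee_pdivrMl //.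
apply: le_ereal_inf_tmp => _ [F [Fitv SF] <-].
have [x Fx] := choice Fitv.
rewrite lee_pdivrMl // -nneseriesZl; last by move=> k _; exact: wlength_ge0.
under eq_eseriesr do rewrite Fx -(wlength_affine_itv b) //.
rewrite lebesgue_measureE outer_measure_open_itv_cover.
apply: ereal_inf_lbound; eexists; last reflexivity.
split=> [k|_ [z Sz <-]]; first by exists (affine_itv a b (x k)).
have [k _ Fkz] := SF z Sz; exists k => //.
by apply: affine_image_itv_sub => //; exists z; rewrite -?Fx.
Qed.

End OuterLebesgue.

Section CylinderMeasure.
Variable R : realType.
Implicit Types (S : set R) (D c : R) (k n : nat).
Local Notation lam := (@lebesgue_measure R).

Lemma nneseries_le_bound (u : nat -> R) (m : nat) (b : R) :
  (forall k, (m <= k)%N -> 0 <= u k) -> (forall M, \sum_(m <= k < M) u k <= b) ->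
  (\sum_(m <= k <oo) (u k)%:E <= b%:E)%E.
Proof.
move=> u0 ub; apply: lime_le.
  by apply: is_cvg_ereal_nneg_natsum => k mk; rewrite lee_fin u0.
by apply: nearW => M; rewrite sumEFin lee_fin.
Qed.

Definition digit_ge k : set R := `]0, (oddr k)^-1[.

Definition digit_len k : R := (oddr k)^-1 - (oddr k.+1)^-1.

Definition digit_mass k0 M (Q : nat -> Prop) : R :=
  \sum_(k < M | `[< (k0 <= k)%N /\ Q k >]) digit_len k.

Lemma digit_len_ge0 k : (0 < k)%N -> 0 <= digit_len k.
Proof. by move=> k0; rewrite subr_ge0 ler_inv_oddr. Qed.

Lemma digit_lenE k : (0 < k)%N ->
  ((k.*2)%:R^-1 * (oddr k)^-1 + (k.*2)%:R^-1 * (oddr k.+1)^-1 = digit_len k :> R).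
Proof.
move=> k0; rewrite /digit_len oddrE // oddrS natr_double.
have k1 : 1 <= (k%:R : R) by rewrite ler1n.
by field; apply/and3P; split; apply: lt0r_neq0; lra.
Qed.

(* The points with first digit [2k] whose image under [T] lies in [S]. *)
Definition branch_image S k : set R :=
  (fun z => (k.*2)%:R^-1 * z + (k.*2)%:R^-1) @` (S `&` digit_ge k)
  `|` (fun z => - (k.*2)%:R^-1 * z + (k.*2)%:R^-1) @` (S `&` digit_ge k.+1).

Lemma lebesgue_branch_image_le S k c : (0 < k)%N -> 0 <= c ->
  (lam (S `&` digit_ge k) <= (c * (oddr k)^-1)%:E)%E ->
  (lam (S `&` digit_ge k.+1) <= (c * (oddr k.+1)^-1)%:E)%E ->
  (lam (branch_image S k) <= (c * digit_len k)%:E)%E.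
Proof.
move=> k0 c0 hk hk1.
have k2_gt0 : 0 < (k.*2)%:R^-1 :> R by rewrite invr_gt0 ltr0n double_gt0.
apply: le_trans (lebesgue_measureU2 _ _) _.
apply: le_trans (leeD (lebesgue_measure_affine _ _ _)
  (lebesgue_measure_affine _ _ _)) _; rewrite ?oppr_eq0 ?gt_eqF //.
rewrite normrN gtr0_norm // -digit_lenE // mulrDr EFinD.
by apply: leeD; rewrite mulrCA EFinM; apply: lee_wpmul2l => //; rewrite lee_fin ltW.
Qed.

Lemma cylinderS_sub (P : nat -> R -> R -> Prop) n D k0 : (0 < k0)%N ->
  cylinder P n.+1 D `&` digit_ge k0 `<=`
  \bigcup_k if `[< (k0 <= k)%N /\ P 0%N D (k.*2)%:R >] then
              branch_image (cylinder (fun m => P m.+1) n (k.*2)%:R) k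
            else set0.
Proof.
move=> k00 y [[iy [Py Cy]]]; rewrite /digit_ge /= in_itv /= => /andP[y0 yk0].
have [k k0k [d1E iT [[/andP[T0 T1] ye]|[/andP[T0 T1] ye]]]] :=
  sengel_digit k00 iy y0 yk0; rewrite d1E in Py Cy.
all: exists k => //; rewrite asboolT //.
- left; exists (sengelT y); last exact/esym.
  by split => //; rewrite /digit_ge /= in_itv /= T0.
- right; exists (sengelT y); last exact/esym.
  by split => //; rewrite /digit_ge /= in_itv /= T0.
Qed.

(* [k0 <= D <= 2 k0] holds when [D = 2k] is the previous digit and [k0] is
   [k] or [k + 1], the least half-digit allowed next. *)
Lemma lebesgue_cylinder_le n : forall (P : nat -> R -> R -> Prop) (q : nat -> R),
  (forall m, 0 <= q m) ->
  (forall m k0 D M, (0 < k0)%N -> k0%:R <= D <= (k0.*2)%:R ->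
     digit_mass k0 M (fun k => P m D (k.*2)%:R) <= q m * (oddr k0)^-1) ->
  forall k0 D, (0 < k0)%N -> k0%:R <= D <= (k0.*2)%:R ->
  (lam (cylinder P n D `&` digit_ge k0) <=
     ((\prod_(m < n) q m) * (oddr k0)^-1)%:E)%E.
Proof.
elim: n => [|n IH] P q q0 hq k0 D k00 hD.
  rewrite big_ord0 mul1r; apply: le_trans (le_lebesgue_measure (@subIsetr _ _ _)) _.
  by rewrite /digit_ge lebesgue_measure_itv0 // invr_ge0 ltW // oddr_gt0.
set Pi := \prod_(m < n) q m.+1.
have Pi0 : 0 <= Pi by apply: prodr_ge0.
have IHn := IH (fun m => P m.+1) _ (fun m => q0 m.+1) (fun m => hq m.+1).
set cond := fun k => `[< (k0 <= k)%N /\ P 0%N D (k.*2)%:R >].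
apply: le_trans (le_lebesgue_measure (cylinderS_sub k00)) _.
apply: le_trans (lebesgue_measure_bigcup _) _.
apply: (@le_trans _ _ (\sum_(k <oo) (if cond k then Pi * digit_len k else 0)%:E)%E).
  apply: lee_nneseries => [k _ _|k _]; first exact: measure_ge0.
  rewrite /cond; case: ifPn => [/asboolP[k0k _] | _]; last by rewrite measure0.
  have k0' := leq_trans k00 k0k.
  by apply: lebesgue_branch_image_le => //; apply: IHn; rewrite // !ler_nat; lia.
rewrite big_ord_recl [q 0%N * _]mulrC -mulrA.
apply: nneseries_le_bound => [k _|M].
  rewrite /cond; case: ifPn => [/asboolP[k0k _]|_] //.
  by rewrite mulr_ge0 // digit_len_ge0 // (leq_trans k00 k0k).
by rewrite big_mkord -big_mkcond /= -mulr_sumr ler_wpM2l //; apply: hq.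
Qed.

End CylinderMeasure.

Section DigitLength.
Variable R : realType.
Implicit Types (S : pred nat) (Q : nat -> Prop) (k p r M : nat).

Lemma sum_digit_len_le S p r M : (0 < p)%N ->
  (forall k, (k < M)%N -> S k -> (p <= k < r)%N) ->
  \sum_(k < M | S k) digit_len R k <= (oddr p)^-1 - (oddr (maxn p (minn M r)))^-1.
Proof.
move=> p0; elim: M => [|M IH] hS; first by rewrite big_ord0 min0n maxn0 subrr.
rewrite big_mkcond big_ord_recr /= -big_mkcond /=.
have {IH}IH := IH (fun k kM => hS k (ltnW kM)).
case: ifPn => SM; last first.
  by rewrite addr0 (le_trans IH) // lerD2l lerN2 ler_inv_oddr //; lia.
have /andP[pM Mr] := hS M (ltnSn M) SM.
rewrite (_ : maxn p (minn M r) = M) in IH; last by lia.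
rewrite (_ : maxn p (minn M.+1 r) = M.+1); last by lia.
by apply: le_trans (lerD IH (lexx _)) _; rewrite /digit_len addrA subrK.
Qed.

Lemma digit_mass_window k0 M Q p r : (0 < p)%N ->
  (forall k, (k0 <= k)%N -> Q k -> (p <= k < r)%N) ->
  digit_mass R k0 M Q <= (oddr p)^-1 - (oddr (maxn p r))^-1.
Proof.
move=> p0 hQ; pose S k := `[< (k0 <= k)%N /\ Q k >].
apply: le_trans (sum_digit_len_le (S := S) (r := r) p0 _) _.
  by move=> k _; rewrite /S => /asboolP[k0k /(hQ k k0k)].
by rewrite lerD2l lerN2 ler_inv_oddr //; lia.
Qed.

Lemma digit_mass_tail k0 M Q p : (0 < p)%N ->
  (forall k, (k0 <= k)%N -> Q k -> (p <= k)%N) -> digit_mass R k0 M Q <= (oddr p)^-1.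
Proof.
move=> p0 hQ; pose S k := `[< (k0 <= k)%N /\ Q k >].
apply: le_trans (sum_digit_len_le (S := S) (r := M) p0 _) _.
  by move=> k kM; rewrite /S => /asboolP[k0k /(hQ k k0k) ->].
by rewrite lerBlDr lerDl invr_ge0 ltW // oddr_gt0 //; lia.
Qed.

Lemma digit_mass_any k0 M Q : (0 < k0)%N -> digit_mass R k0 M Q <= (oddr k0)^-1.
Proof. by move=> k00; apply: digit_mass_tail. Qed.

(* The admissible half-digits are at least [t D / 2 >= t k0 / 2], so their
   total length is [O(1 / (t k0))]. *)
Lemma digit_mass_large (t D : R) k0 M Q : 0 < t -> (0 < k0)%N ->
  k0%:R <= D <= (k0.*2)%:R -> (forall k, Q k -> t * D <= (k.*2)%:R) ->
  digit_mass R k0 M Q <= 8 / t * (oddr k0)^-1.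
Proof.
move=> t0 k00 /andP[D1 D2] HQ.
have k1 : (1 : R) <= k0%:R by rewrite ler1n.
set T := Num.truncn (t * D / 2).
have /andP[tr1 tr2] : T%:R <= t * D / 2 < T.+1%:R.
  by apply: truncn_itv; rewrite divr_ge0 // mulr_ge0 // ?ltW //; lra.
set p := maxn k0 T.
have p0 : (0 < p)%N by rewrite /p; lia.
apply: le_trans (digit_mass_tail M p0 _) _.
  move=> k k0k /HQ tDk; suff : (T <= k)%N by rewrite /p; lia.
  rewrite -(ler_nat R); apply: le_trans tr1 _.
  by rewrite ler_pdivrMr // [_ * 2]mulrC -natr_double.
have hp1 : (k0%:R : R) <= p%:R by rewrite ler_nat /p; lia.
have hp2 : (T.+1%:R : R) <= p%:R + 1 by rewrite natr1 ler_nat /p; lia.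
have tD : t * k0%:R <= t * D by rewrite ler_pM2l.
rewrite ler_pdivlMr ?oddr_gt0 // mulrC ler_pdivrMr ?oddr_gt0 // mulrAC.
rewrite ler_pdivlMr // oddrE // oddrE //; lra.
Qed.

(* The admissible half-digits are below [s D / 2 <= s k0], which leaves out a
   tail of length about [1 / (2 s k0)]. *)
Lemma digit_mass_small (s D : R) k0 M Q : 1 <= s -> (0 < k0)%N ->
  k0%:R <= D <= (k0.*2)%:R -> (forall k, Q k -> (k.*2)%:R < s * D) ->
  digit_mass R k0 M Q <= (1 - (3 * s)^-1) * (oddr k0)^-1.
Proof.
move=> s1 k00 /andP[D1 D2] HQ.
have k1 : (1 : R) <= k0%:R by rewrite ler1n.
set T := Num.truncn (s * D / 2).
have /andP[tr1 tr2] : T%:R <= s * D / 2 < T.+1%:R.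
  by apply: truncn_itv; rewrite divr_ge0 // mulr_ge0 //; lra.
apply: le_trans (digit_mass_window M (r := T.+1) k00 _) _.
  move=> k k0k /HQ hk; rewrite k0k /= -(ltr_nat R); apply: le_lt_trans tr2.
  by rewrite ler_pdivlMr // [_ * 2]mulrC -natr_double ltW.
have odd_k0 := oddr_ge1 R k00.
rewrite mulrBl mul1r lerD2l lerN2 -invfM lef_pV2 ?posrE ?oddr_gt0;
  [| by apply: mulr_gt0; [lra | exact: oddr_gt0] | by [] | lia].
have s_odd : oddr k0 <= s * oddr k0 by rewrite ler_peMl //; lra.
case: (leqP k0 T.+1) => _; last by lra.
have sD : s * D <= s * (2 * k0%:R) by rewrite ler_wpM2l -?natr_double //; lra.
have sk0 : s <= s * k0%:R by rewrite ler_peMr //; lra.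
by rewrite oddrS oddrE //; lra.
Qed.

End DigitLength.

Section InverseSeries.
Variable R : realType.
Variable phi : nat -> R.
Hypothesis phi_pos : forall n, (0 < n)%N -> 0 < phi n.
Local Notation series := (\sum_(1 <= n <oo) ((phi n)^-1)%:E)%E.
Implicit Types (a b M N : nat).

Definition psum M := \sum_(1 <= n < M) (phi n)^-1.

Lemma sum_inv_phi_ge0 a b : 0 <= \sum_(a.+1 <= n < b) (phi n)^-1.
Proof.
rewrite big_seq sumr_ge0 // => n; rewrite mem_index_iota => /andP[an _].
by rewrite invr_ge0 ltW // phi_pos //; lia.
Qed.

Lemma psum_split N M : (0 < N)%N -> (N <= M)%N ->
  psum M = psum N + \sum_(N <= n < M) (phi n)^-1.
Proof. by move=> N0 NM; rewrite /psum (big_cat_nat N0 NM). Qed.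

Lemma le_psum : {homo psum : a b / (a <= b)%N >-> a <= b}.
Proof.
case=> [|a] b ab; first by rewrite /psum big_geq // sum_inv_phi_ge0.
by rewrite (psum_split _ ab) // lerDl -[a.+1]prednK //; exact: sum_inv_phi_ge0.
Qed.

Lemma psum_le_series M : ((psum M)%:E <= series)%E.
Proof.
rewrite /psum -sumEFin; apply: nneseries_lim_ge => n n1 _.
by rewrite lee_fin invr_ge0 ltW // phi_pos.
Qed.

Lemma series_le_bound (c : R) : (forall M, psum M <= c) -> (series <= c%:E)%E.
Proof. by apply: nneseries_le_bound => n n1; rewrite invr_ge0 ltW // phi_pos. Qed.

Lemma tail_sum_unbounded : series = +oo%E -> forall N (B : R), (0 < N)%N ->
  exists M, B < \sum_(N <= n < M) (phi n)^-1.
Proof.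
move=> Hinf N B N0; apply/not_existsP => hB.
suff : (series <= (psum N + B)%:E)%E by rewrite Hinf leye_eq.
apply: series_le_bound => M; apply: le_trans (le_psum (leq_maxr N M)) _.
by rewrite (psum_split N0 (leq_maxl N M)) lerD2l leNgt; apply/negP/hB.
Qed.

Lemma tail_sum_small : (series < +oo)%E -> forall e : R, 0 < e ->
  exists2 N, (0 < N)%N & forall M, \sum_(N <= n < M) (phi n)^-1 <= e.
Proof.
move=> Hfin e e0.
have s0 : (0 <= series)%E by apply: le_trans (psum_le_series 0); rewrite /psum big_geq.
have [s sE] : exists s, series = s%:E.
  by exists (fine series); rewrite fineK // ge0_fin_numE.
have psum_le M : psum M <= s by rewrite -lee_fin -sE psum_le_series.
have s_lub c : (forall M, psum M <= c) -> s <= c.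
  by rewrite -lee_fin -sE; apply: series_le_bound.
clear Hfin s0 sE.
have [N hN] : exists N, s - e < psum N.
  apply/not_existsP => h; have : s <= s - e.
    by apply: s_lub => M; rewrite leNgt; apply/negP/h.
  lra.
exists N.+1 => // M; case: (leqP M N.+1) => MN; first by rewrite big_geq // ltW.
have := psum_le M; rewrite (psum_split _ (ltnW MN)) //.
by have := le_psum (leqnSn N); lra.
Qed.

End InverseSeries.

Lemma prod1B_le_inv (R : realFieldType) (u : nat -> R) (M : nat) :
  (forall m, 0 <= u m <= 1) ->
  \prod_(m < M) (1 - u m) <= (1 + \sum_(m < M) u m)^-1.
Proof.
move=> u01; elim: M => [|M IH]; first by rewrite !big_ord0 addr0 invr1.
rewrite !big_ord_recr /=.
have S0 : 0 <= \sum_(m < M) u m by apply: sumr_ge0 => m _; case/andP: (u01 m).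
have /andP[uM0 uM1] := u01 M.
apply: le_trans (ler_wpM2r _ IH) _; first by rewrite subr_ge0.
set S := \sum_(m < M) u m in S0 *; rewrite -subr_ge0.
have -> : (1 + (S + u M))^-1 - (1 + S)^-1 * (1 - u M) =
          u M * (S + u M) / ((1 + S) * (1 + (S + u M))).
  by field; apply/andP; split; apply: lt0r_neq0; lra.
by rewrite divr_ge0 ?mulr_ge0 //; lra.
Qed.

Section QuotientEvents.
Variable R : realType.
Variable phi : nat -> R.
Hypothesis phi_pos : forall n, (0 < n)%N -> 0 < phi n.
Local Notation lam := (@lebesgue_measure R).
Implicit Types (m n N M : nat) (x : R).

Definition large_quotient n : set R := [set x | irr01 x /\ phi n <= sengel_R n x].

Definition small_quotients N : set R :=
  [set x | irr01 x /\ forall n, (N < n)%N -> sengel_R n x < phi n].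

Lemma cylinder_itv01 (P : nat -> R -> R -> Prop) n x :
  cylinder P n 1 x -> irr01 x -> (cylinder P n 1 `&` digit_ge 1) x.
Proof.
move=> Cx /irr01P[/andP[x0 x1] _]; split=> //.
by rewrite /digit_ge /= oddr1 invr1 in_itv /= x0.
Qed.

Lemma lebesgue_large_quotient_le n : (0 < n)%N ->
  (lam (large_quotient n) <= (8 / phi n)%:E)%E.
Proof.
case: n => // n _; have pn := phi_pos (ltn0Sn n).
pose P m (prev cur : R) := m = n -> phi n.+1 * prev <= cur.
pose q m : R := if m == n then 8 / phi n.+1 else 1.
have sub : large_quotient n.+1 `<=` cylinder P n.+1 1 `&` digit_ge 1.
  move=> x [x01 hx]; apply: cylinder_itv01 => //.
  apply: mem_cylinder => // m _ mn; move: hx; rewrite mn sengel_RE.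
  by rewrite ler_pdivlMr ?prev_digit_gt0 // mulrC.
have prod_q : \prod_(m < n.+1) q m = 8 / phi n.+1.
  by rewrite big_ord_recr /= /q eqxx big1 ?mul1r // => i _; rewrite ifF // ltn_eqF.
apply: le_trans (le_lebesgue_measure sub) _.
apply: le_trans (@lebesgue_cylinder_le _ n.+1 P q _ _ 1 1 _ _) _ => //.
- by move=> m; rewrite /q; case: ifP => _ //; rewrite divr_ge0 // ltW.
- move=> m k0 D M k00 hD; rewrite /q; case: ifPn => [/eqP hm|_].
    by apply: (digit_mass_large (D := D)) => // k; apply.
  by rewrite mul1r digit_mass_any.
- by rewrite lexx ler1n.
by rewrite oddr1 invr1 mulr1 prod_q.
Qed.

Lemma lebesgue_small_quotients_le N M : (forall n, (N < n)%N -> 1 <= phi n) ->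
  (lam (small_quotients N) <= ((1 + \sum_(N <= m < M) (3 * phi m.+1)^-1)^-1)%:E)%E.
Proof.
move=> phi1.
pose u m : R := if (N <= m)%N then (3 * phi m.+1)^-1 else 0.
pose P m (prev cur : R) := (N <= m)%N -> cur < phi m.+1 * prev.
have u01 m : 0 <= u m <= 1.
  rewrite /u; case: ifP => h; last by rewrite lexx ler01.
  have p1 : 1 <= phi m.+1 by apply: phi1; lia.
  by rewrite invr_ge0 invf_le1 ?mulr_ge0 ?mulr_gt0 //; lra.
have sub : small_quotients N `<=` cylinder P M 1 `&` digit_ge 1.
  move=> x [x01 hx]; apply: cylinder_itv01 => //.
  apply: mem_cylinder => // m mM Nm.
  by rewrite -ltr_pdivrMr ?prev_digit_gt0 // -sengel_RE hx.
apply: le_trans (le_lebesgue_measure sub) _.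
apply: le_trans (@lebesgue_cylinder_le _ M P (fun m => 1 - u m) _ _ 1 1 _ _) _ => //.
- by move=> m; rewrite subr_ge0; case/andP: (u01 m).
- move=> m k0 D M' k00 hD; rewrite /u; case: ifPn => Nm.
    apply: (digit_mass_small (D := D)) => //; first by apply: phi1; lia.
    by move=> k; apply.
  by rewrite subr0 mul1r digit_mass_any.
- by rewrite lexx ler1n.
rewrite oddr1 invr1 mulr1 lee_fin (le_trans (prod1B_le_inv _ u01)) //.
by rewrite big_geq_mkord big_mkcondr.
Qed.

End QuotientEvents.

Section MeasureOfRset.
Variable R : realType.
Variable phi : nat -> R.
Hypothesis phi_pos : forall n, (0 < n)%N -> 0 < phi n.
Local Notation lam := (@lebesgue_measure R).
Local Notation series := (\sum_(1 <= n <oo) ((phi n)^-1)%:E)%E.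
Implicit Types (m n N M : nat) (x : R).

Lemma Rset_sub_large_quotient N : Rset phi `<=` \bigcup_j large_quotient phi (j + N).
Proof.
move=> x [x01 /(_ N)[n [Nn hn]]]; exists (n - N)%N => //.
by rewrite subnK ?(ltnW Nn).
Qed.

Lemma lebesgue_Rset_eq0 : (series < +oo)%E -> lam (Rset phi) = 0%E.
Proof.
move=> Hfin; apply/eqP; rewrite eq_le measure_ge0 andbT.
apply/lee_addgt0Pr => e e0; rewrite add0e.
have [N N0 hN] := tail_sum_small phi_pos Hfin (divr_gt0 e0 (ltr0n _ 8)).
apply: le_trans (le_lebesgue_measure (Rset_sub_large_quotient N)) _.
apply: le_trans (lebesgue_measure_bigcup _) _.
apply: (@le_trans _ _ (\sum_(j <oo) (8 / phi (j + N))%:E)%E).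
  apply: lee_nneseries => [j _ _|j _]; first exact: measure_ge0.
  by apply: lebesgue_large_quotient_le => //; rewrite addn_gt0 N0 orbT.
apply: nneseries_le_bound => [j _|M].
  by rewrite divr_ge0 // ltW // phi_pos // addn_gt0 N0 orbT.
have := hN (M + N); rewrite -{1}[N]add0n big_addn addnK -mulr_sumr.
by rewrite ler_pdivlMr // [_ * 8]mulrC.
Qed.

Lemma subset_small_quotients N N' : (N <= N')%N ->
  small_quotients phi N `<=` small_quotients phi N'.
Proof. by move=> NN' x [x01 hx]; split=> // n /(leq_ltn_trans NN'); exact: hx. Qed.

Lemma lebesgue_small_quotients_eq0 N : series = +oo%E ->
  (forall n, (N < n)%N -> 1 <= phi n) -> lam (small_quotients phi N) = 0%E.
Proof.
move=> Hinf phi1; apply/eqP; rewrite eq_le measure_ge0 andbT.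
apply/lee_addgt0Pr => e e0; rewrite add0e.
have [M hM] := tail_sum_unbounded phi_pos Hinf (3 / e) (ltn0Sn N).
rewrite big_add1 /= in hM.
apply: le_trans (lebesgue_small_quotients_le M.-1 phi1) _; rewrite lee_fin.
set S := \sum_(N <= m < M.-1) (phi m.+1)^-1 in hM.
have -> : \sum_(N <= m < M.-1) (3 * phi m.+1)^-1 = S / 3.
  by rewrite /S mulr_suml; apply: eq_bigr => m _; rewrite invfM mulrC.
have S_gt0 : 0 < S by apply: le_lt_trans hM; rewrite divr_ge0 // ltW.
rewrite invf_ple ?posrE ?addr_gt0 ?divr_gt0 //.
move: hM; rewrite ltr_pdivrMr // mulrC -ltr_pdivrMl //; lra.
Qed.

Lemma Rset_or_small_quotients x : irr01 x ->
  Rset phi x \/ exists N, small_quotients phi N x.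
Proof.
move=> x01; have [|nR] := pselect (Rset phi x); [by left | right].
have /existsNP[N hN] : ~ forall N, exists n, (N < n)%N /\ phi n <= sengel_R n x.
  by move=> h; apply: nR.
exists N; split=> // n Nn; rewrite ltNge; apply/negP => hn.
by apply: hN; exists n.
Qed.

Lemma irr01_sub_Rset : ~ (exists N, forall n, (N < n)%N -> 1 <= phi n) ->
  @irr01 R `<=` Rset phi.
Proof.
move=> nophi1 x x01; split=> // N.
have /existsNP[n] : ~ forall n, (N < n)%N -> 1 <= phi n.
  by move=> h; apply: nophi1; exists N.
move=> /not_implyP[Nn /negP]; rewrite -ltNge => phin.
exists n; split=> //; case: n Nn phin => // n _ phin.
exact: le_trans (ltW phin) (sengel_R_ge1 n x01).
Qed.

Lemma lebesgue_Rset_eq1 : series = +oo%E -> lam (Rset phi) = 1%E.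
Proof.
move=> Hinf; apply/le_anti/andP; split.
  rewrite -(lebesgue_measure_itv0 ler01); apply: le_lebesgue_measure.
  by move=> x [/irr01P[x01 _] _]; rewrite /= in_itv.
have irr01_cover Z : @irr01 R `<=` Rset phi `|` Z ->
    `]0%R, 1%R[ `<=` Rset phi `|` (rational `|` Z).
  move=> sub x; rewrite /= in_itv /= => x01.
  have [|ix] := pselect (rational x); [by right; left|].
  by case: (sub x); [apply/irr01P | left | right; right].
have [[N phi1]|nophi1] := pselect (exists N, forall n, (N < n)%N -> 1 <= phi n).
  apply: (lebesgue_cover01_ge1 (irr01_cover (\bigcup_j small_quotients phi (j + N)) _)).
    move=> x /(Rset_or_small_quotients)[|[N' Bx]]; [by left | right].
    by exists N' => //; apply: subset_small_quotients Bx; rewrite leq_addr.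
  apply/eqP; rewrite eq_le measure_ge0 andbT.
  apply: le_trans (lebesgue_measureU2 _ _) _; rewrite lebesgue_measure_rat add0e.
  apply: le_trans (lebesgue_measure_bigcup _) _; rewrite eseries0 // => j _ _.
  apply: lebesgue_small_quotients_eq0 => // n Nn; apply: phi1.
  by apply: leq_ltn_trans Nn; rewrite leq_addl.
apply: (lebesgue_cover01_ge1 (irr01_cover set0 _)).
  by move=> x /(irr01_sub_Rset nophi1); left.
by rewrite setU0 lebesgue_measure_rat.
Qed.

End MeasureOfRset.

Unset Implicit Arguments.
Set Strict Implicit.

Theorem theorem1p3 (R : realType) (phi : nat -> R)
    (phi_pos : forall n : nat, (0 < n)%N -> 0 < phi n) :
  ((\sum_(1 <= n <oo) ((phi n)^-1)%:E = +oo)%E ->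
     (@lebesgue_measure R (Rset phi) = 1)%E) /\
  ((\sum_(1 <= n <oo) ((phi n)^-1)%:E < +oo)%E ->
     (@lebesgue_measure R (Rset phi) = 0)%E).
Proof.
split; [exact: lebesgue_Rset_eq1 | exact: lebesgue_Rset_eq0].
Qed.
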